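(* Let $T=(V,E)$ be a tree with $\mathrm{pthin}(T)=2$, and let $\sigma$ be an ordering of $V$ and $S=\{V^0,V^1\}$ a partition of $V$ that are strongly consistent. Let $v_1,v_2,v_3$ be vertices with $v_1<v_2<v_3$ and $\deg(v_2)=3$. If a vertex $v_0$ is the nexus between $v_1,v_2,v_3$, then $v_0$ is adjacent to $v_2$.
   Context: For a graph $G=(V,E)$, a linear ordering $<$ of $V$ and a partition of $V$ into classes are called strongly consistent if for every triple $r<s<t$ of vertices with $rt\in E$: if $r$ and $s$ belong to the same class then $st\in E$, and if $s$ and $t$ belong to the same class then $rs\in E$. The proper thinness $\mathrm{pthin}(G)$ is the minimum $k$ such that some ordering and some partition into $k$ classes are strongly consistent. For distinct vertices $v_0,v_1,v_2,v_3$ of a tree $T$, let $C_i$ be the unique simple path from $v_0$ to $v_i$ ($i=1,2,3$) and $C_i'$ its vertex set minus $v_0$; $v_0$ is the nexus between $v_1,v_2,v_3$ if $C_1',C_2',C_3'$ are pairwise disjoint. *)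

From mathcomp Require Import all_boot.
Set Implicit Arguments. Unset Strict Implicit. Unset Printing Implicit Defensive.

Definition simple_graph (T : finType) (e : rel T) : Prop :=
  symmetric e /\ irreflexive e.

Definition is_tree (T : finType) (e : rel T) : Prop :=
  simple_graph e /\
  (forall x y : T, connect e x y) /\
  (forall s : seq T, uniq s -> 3 <= size s -> ~~ cycle e s).

Definition deg (T : finType) (e : rel T) (x : T) : nat := #|[set y | e x y]|.

(* A linear ordering of V is represented by an injective rank function
   ord : T -> nat, with x < y iff ord x < ord y; a partition into k classes
   by a class map c : T -> 'I_k. *)
Definition strongly_consistent (T : finType) (e : rel T) (k : nat)
  (ord : T -> nat) (c : T -> 'I_k) : Prop :=
  forall r s t : T, ord r < ord s -> ord s < ord t -> e r t ->
    (c r = c s -> e s t) /\ (c s = c t -> e r s).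

Definition pthin_ok (T : finType) (e : rel T) (k : nat) : Prop :=
  exists (ord : T -> nat) (c : T -> 'I_k),
    injective ord /\ strongly_consistent e ord c.

Definition pthin_eq (T : finType) (e : rel T) (k : nat) : Prop :=
  pthin_ok e k /\ forall k', pthin_ok e k' -> k <= k'.

(* p is a simple path from x to y, listing the vertices after x:
   x :: p is a uniq e-path ending at y.  Its vertex set minus x is p. *)
Definition simple_path (T : finType) (e : rel T) (x y : T) (p : seq T) : bool :=
  [&& path e x p, last x p == y & uniq (x :: p)].

Definition nexus (T : finType) (e : rel T) (v0 v1 v2 v3 : T) : Prop :=
  uniq [:: v0; v1; v2; v3] /\
  forall p1 p2 p3 : seq T,
    simple_path e v0 v1 p1 -> simple_path e v0 v2 p2 -> simple_path e v0 v3 p3 ->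
    [/\ [disjoint p1 & p2], [disjoint p1 & p3] & [disjoint p2 & p3]].

From mathcomp Require Import all_boot zify.
Set Implicit Arguments. Unset Strict Implicit.

(* Suppose v0 is not adjacent to v2.  By the nexus condition, the tree paths
   from v0 to v1 and to v3 avoid v2 and all its neighbours, since otherwise a
   path from v0 to v2 could be routed through them.  No such edge can jump over
   v2 in the ordering: for an edge r t with r < v2 < t and neither end adjacent
   to v2, strong consistency puts r and t in one class and v2 together with all
   its neighbours in the other; as a tree has no triangles, two neighbours of v2
   in its own class cannot lie on the same side of v2, so deg v2 <= 2.  Hence
   both paths stay on the side of v2 where v0 lies, contradicting
   v1 < v2 < v3. *)

Definition triangle_free (T : Type) (e : rel T) : Prop :=
  forall a b d, e a b -> e b d -> ~~ e d a.

Lemma ord2_eq (a b d : 'I_2) : a <> d -> b <> d -> a = b.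
Proof.
case: a b d => [a ha] [b hb] [d hd] ad bd; apply: val_inj => /=.
have {}ad : a <> d by move=> eq_ad; apply: ad; exact: val_inj.
have {}bd : b <> d by move=> eq_bd; apply: bd; exact: val_inj.
lia.
Qed.

Definition far (T : eqType) (e : rel T) (v u : T) : bool := (u != v) && ~~ e u v.

Section SimplePaths.

Variables (T : finType) (e : rel T).

Lemma connect_simple_path x y : connect e x y -> exists p, simple_path e x y p.
Proof.
case/connectP=> p pth ->; case: (shortenP pth) => q qpth quniq _.
by exists q; rewrite /simple_path qpth eqxx quniq.
Qed.

Lemma simple_path_prefix x y p u :
  simple_path e x y p -> u \in p ->
  exists q, simple_path e x u (rcons q u) /\ {subset rcons q u <= p}.
Proof.
move=> sp up; case/splitPr: up sp => p1 p2 /and3P[pth _ uniq_p].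
exists p1; split; last first.
  by move=> w; rewrite mem_rcons !(mem_cat, inE) => /orP[->|->]; rewrite ?orbT.
move: pth uniq_p; rewrite cat_path -cat_cons cat_uniq /= => /and3P[pth1 eu _].
move=> /and3P[uniq_xp1 /norP[u_new _] _].
by rewrite /simple_path rcons_path pth1 eu last_rcons eqxx -rcons_cons rcons_uniq u_new.
Qed.

Lemma simple_path_rcons x y p z :
  simple_path e x y p -> e y z -> z \notin x :: p -> simple_path e x z (rcons p z).
Proof.
case/and3P=> pth /eqP <- uniq_p eyz z_new.
by rewrite /simple_path rcons_path pth eyz last_rcons eqxx -rcons_cons rcons_uniq z_new.
Qed.

Lemma simple_path_far x v y p :
  x != v -> (forall q, simple_path e x v q -> [disjoint p & q]) ->
  simple_path e x y p -> all (far e v) p.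
Proof.
move=> xv disj sp; have v_notin_p : v \notin p.
  apply/negP => vp; have [q [spq _]] := simple_path_prefix sp vp.
  by move: (disjointFr (disj _ spq) vp); rewrite mem_rcons mem_head.
apply/allP => u up; rewrite /far; apply/andP; split.
  by apply: contraNneq v_notin_p => <-.
apply/negP => euv; have [q [spq sub]] := simple_path_prefix sp up.
have spv : simple_path e x v (rcons (rcons q u) v).
  apply: simple_path_rcons spq euv _; rewrite inE negb_or eq_sym xv /=.
  by apply: contra v_notin_p => /sub.
by move: (disjointFr (disj _ spv) up); rewrite mem_rcons inE mem_rcons mem_head orbT.
Qed.

End SimplePaths.

Section StronglyConsistentOrdering.

Variables (T : finType) (e : rel T) (ord : T -> nat).
Hypotheses (e_sym : symmetric e) (e_irr : irreflexive e).
Hypotheses (e_triangle_free : triangle_free e) (ord_inj : injective ord).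

Lemma deg_le2_of_monochromatic_nbhd k (c : T -> 'I_k) v :
  strongly_consistent e ord c -> (forall x, e v x -> c x = c v) -> deg e v <= 2.
Proof.
move=> sc mono.
pose side b := [set x | e v x & (ord x < ord v) == b].
have side_le1 b : #|side b| <= 1.
  apply/card_le1_eqP => x y; rewrite !inE => /andP[evx /eqP xb] /andP[evy /eqP yb].
  case: (eqVneq x y) => // nxy; exfalso.
  wlog xy : x y evx evy xb yb nxy / ord x < ord y.
    move=> IH; case: (ltngtP (ord x) (ord y)) => [||/ord_inj xy].
    - exact: IH.
    - by move=> yx; apply: (IH y x) => //; rewrite eq_sym.
    - by rewrite xy eqxx in nxy.
  have nexy : ~~ e x y.
    by apply: contraL evx => exy; apply: e_triangle_free exy _; rewrite e_sym.
  case: b xb yb => [xv yv | /negbT xv /negbT yv].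
  - have exv : e x v by rewrite e_sym.
    have [_ sc_xyv] := sc x y v xy yv exv.
    by move: nexy; rewrite sc_xyv ?mono.
  - have ord_v_lt w : e v w -> ~~ (ord w < ord v) -> ord v < ord w.
      move=> evw; rewrite -leqNgt leq_eqVlt => /orP[/eqP/ord_inj vw|//].
      by move: evw; rewrite vw e_irr.
    have [sc_vxy _] := sc v x y (ord_v_lt x evx xv) xy evy.
    by move: nexy; rewrite sc_vxy ?mono.
have nbhd_sides : [set x | e v x] \subset side true :|: side false.
  by apply/subsetP => x; rewrite !inE => ->; case: (_ < _).
rewrite /deg (leq_trans (subset_leq_card nbhd_sides)) //.
by rewrite (leq_trans (leq_card_setU _ _)) // (leq_add (side_le1 _) (side_le1 _)).
Qed.

Variable c : T -> 'I_2.
Hypothesis c_sc : strongly_consistent e ord c.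

Lemma nbhd_monochromatic_of_jump r v t :
  ord r < ord v -> ord v < ord t -> e r t -> ~~ e v r -> ~~ e v t ->
  forall x, e v x -> c x = c v.
Proof.
move=> rv vt ert nvr nvt.
have [sc_rvt sc_vrt] := c_sc rv vt ert.
have crv : c r <> c v by move/sc_rvt; rewrite (negbTE nvt).
have ctv : c t <> c v by move/esym/sc_vrt; rewrite e_sym (negbTE nvr).
have crt : c r = c t := ord2_eq crv ctv.
move=> x evx; apply: ord2_eq (nesym crv) => cxr.
have exv : e x v by rewrite e_sym.
have xr : ord x != ord r by rewrite (inj_eq ord_inj); apply: contraNneq nvr => <-.
have xt : ord x != ord t by rewrite (inj_eq ord_inj); apply: contraNneq nvt => <-.
case: ltngtP xr => // [xr | rx] _.
  have [sc_xrv _] := c_sc xr rv exv.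
  by move: nvr; rewrite e_sym sc_xrv.
case: ltngtP xt => // [xt | tx] _.
  have [sc_rxt sc_xrt] := c_sc rx xt ert.
  have ext : e x t by apply: sc_rxt.
  have erx : e r x by apply: sc_xrt; rewrite -crt.
  by move: (e_triangle_free erx ext); rewrite e_sym ert.
have [_ sc_tvx] := c_sc vt tx evx.
by move: nvt; rewrite sc_tvx // cxr.
Qed.

Lemma jump_over_high_degree r v t :
  2 < deg e v -> ord r < ord v -> ord v < ord t -> e r t -> e v r || e v t.
Proof.
move=> deg_v rv vt ert; apply/negPn/negP; rewrite negb_or => /andP[nvr nvt].
have mono := nbhd_monochromatic_of_jump rv vt ert nvr nvt.
by move: deg_v; rewrite ltnNge (deg_le2_of_monochromatic_nbhd c_sc mono).
Qed.

Lemma far_edge_same_side v u w :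
  2 < deg e v -> e u w -> far e v u -> far e v w -> (ord u < ord v) = (ord w < ord v).
Proof.
move=> deg_v.
have no_jump x y : e x y -> far e v x -> far e v y -> ord x < ord v -> ord y < ord v.
  move=> exy /andP[_ nxv] /andP[yv nyv] xv.
  rewrite ltnNge leq_eqVlt negb_or (inj_eq ord_inj) eq_sym yv /=.
  apply/negP => vy; move: (jump_over_high_degree deg_v xv vy exy).
  by rewrite !(e_sym v) (negbTE nxv) (negbTE nyv).
move=> euw fu fw; apply/idP/idP; first exact: no_jump.
by apply: no_jump => //; rewrite e_sym.
Qed.

Lemma far_path_same_side v x p :
  2 < deg e v -> path e x p -> all (far e v) (x :: p) ->
  (ord x < ord v) = (ord (last x p) < ord v).
Proof.
move=> deg_v; elim: p x => [|y p IH] x //= /andP[exy pth] /and3P[fx fy fp].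
by rewrite (far_edge_same_side deg_v exy fx fy) IH //= fy.
Qed.

End StronglyConsistentOrdering.

Lemma tree_triangle_free (T : finType) (e : rel T) : is_tree e -> triangle_free e.
Proof.
case=> [[_ e_irr] [_ acyclic]] a b d eab ebd; apply/negP => eda.
have edge_neq x y : e x y -> x != y by apply: contraTneq => ->; rewrite e_irr.
move: (acyclic [:: a; b; d]); rewrite /= !inE negb_or (eq_sym a d).
by rewrite !edge_neq // eab ebd eda => /(_ isT isT).
Qed.

Theorem corollaryA11 (T : finType) (e : rel T) :
  is_tree e -> pthin_eq e 2 ->
  forall (ord : T -> nat) (c : T -> 'I_2),
    injective ord -> strongly_consistent e ord c ->
  forall v0 v1 v2 v3 : T,
    ord v1 < ord v2 -> ord v2 < ord v3 -> deg e v2 = 3 ->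
    nexus e v0 v1 v2 v3 -> e v0 v2.
Proof.
move=> tree _ ord c ord_inj sc v0 v1 v2 v3 lt12 lt23 deg3 [uniq4 nex].
have [[e_sym e_irr] [e_conn _]] := tree.
have e_tri := tree_triangle_free tree.
have deg_v2 : 2 < deg e v2 by rewrite deg3.
have v0v2 : v0 != v2 by move: uniq4; rewrite /= !inE !negb_or => /andP[/and3P[_ ->]].
apply: contraT => nv0v2.
have [p1 sp1] := connect_simple_path (e_conn v0 v1).
have [p3 sp3] := connect_simple_path (e_conn v0 v3).
have side_of_end p w : simple_path e v0 w p ->
    (forall q, simple_path e v0 v2 q -> [disjoint p & q]) ->
    (ord v0 < ord v2) = (ord w < ord v2).
  move=> sp disj; have /and3P[pth /eqP <- _] := sp.
  apply: (far_path_same_side e_sym e_irr e_tri ord_inj sc deg_v2 pth).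
  by rewrite /= {1}/far v0v2 nv0v2 (simple_path_far v0v2 disj sp).
have side1 : (ord v0 < ord v2) = (ord v1 < ord v2).
  by apply: (side_of_end _ _ sp1) => q sq; case: (nex _ _ _ sp1 sq sp3).
have side3 : (ord v0 < ord v2) = (ord v3 < ord v2).
  apply: (side_of_end _ _ sp3) => q sq.
  by case: (nex _ _ _ sp1 sq sp3) => _ _; rewrite disjoint_sym.
by move: side3; rewrite side1 lt12 ltnNge ltnW.
Qed.
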